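(* Fix a prime $p$ and define $\mathbb{L}_p:\mathbb{Z}[\tfrac1p]\to[0,\infty)$ by $\mathbb{L}_p(r)=|r|+\|r\|_p$. Then $\mathbb{L}_p$ is a length function on the group $\mathbb{Z}[\tfrac1p]$ which is proper and unbounded.
   Context: $\mathbb{Z}[\tfrac1p]=\{a/p^k: a\in\mathbb{Z},k\in\mathbb{N}\}\subset\mathbb{Q}$, viewed as a discrete abelian group under addition; $|r|$ is the usual absolute value. The $p$-adic norm on $\mathbb{Q}$ is $\|0\|_p=0$ and $\|r\|_p=p^{-n}$ if $r=\frac{ap^n}{b}$ with $a,n\in\mathbb{Z}$, $b\in\mathbb{Z}\setminus\{0\}$, $\gcd(a,p)=\gcd(b,p)=\gcd(a,b)=1$. A length function on a discrete group $\Gamma$ is a map $\mathbb{L}:\Gamma\to[0,\infty)$ with $\mathbb{L}(\gamma)=0$ iff $\gamma=e$, $\mathbb{L}(\gamma^{-1})=\mathbb{L}(\gamma)$, and $\mathbb{L}(\gamma_1\gamma_2)\le\mathbb{L}(\gamma_1)+\mathbb{L}(\gamma_2)$. It is proper if $B_{\mathbb{L}}(R)=\{\gamma\in\Gamma:\mathbb{L}(\gamma)\le R\}$ is finite for every $0\le R<\infty$. *)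

From HB Require Import structures.
From mathcomp Require Import all_boot all_order all_algebra.
Set Implicit Arguments. Unset Strict Implicit. Unset Printing Implicit Defensive.
Import Order.TTheory GRing.Theory Num.Theory.
Local Open Scope ring_scope.

Definition Zinvp (p : nat) (r : rat) : Prop :=
  exists (a : int) (k : nat), r = a%:~R / (p%:R ^+ k).

(* p-adic norm on Q: ||0||_p = 0 and ||r||_p = p^(-n) where
   r = a p^n / b with a, b coprime to p.  With r = numq r / denq r in lowest
   terms, n = v_p(numq r) - v_p(denq r). *)
Definition padic_val (p : nat) (r : rat) : int :=
  (logn p `|numq r|%N)%:Z - (logn p `|denq r|%N)%:Z.

Definition padic_norm (p : nat) (r : rat) : rat :=
  if r == 0 then 0 else (p%:R : rat) ^ (- padic_val p r).

Definition Lp (p : nat) (r : rat) : rat := `|r| + padic_norm p r.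

Definition is_length_function (S : rat -> Prop) (L : rat -> rat) : Prop :=
  [/\ (forall r, S r -> 0 <= L r),
      (forall r, S r -> (L r = 0 <-> r = 0)),
      (forall r, S r -> L (- r) = L r)
    & (forall r s, S r -> S s -> L (r + s) <= L r + L s)].

Definition is_proper_length (S : rat -> Prop) (L : rat -> rat) : Prop :=
  forall R : rat, 0 <= R ->
    exists s : seq rat, forall r, S r -> L r <= R -> r \in s.

Definition is_unbounded (S : rat -> Prop) (L : rat -> rat) : Prop :=
  forall R : rat, exists r, S r /\ R < L r.

From mathcomp Require Import all_boot all_order all_algebra.
From mathcomp Require Import zify lra.

Set Implicit Arguments.
Unset Strict Implicit.
Unset Printing Implicit Defensive.

Import Order.TTheory GRing.Theory Num.Theory.
Local Open Scope ring_scope.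

(* Every nonzero r in Z[1/p] can be written a p^z with p not dividing a, and
   then ||r||_p = p^(-z).  Writing r + s over the smaller of the two exponents
   shows that ||.||_p is ultrametric on Z[1/p], so L_p is subadditive.  If
   L_p(r) <= R then |r| <= R and p^(-z) <= R: either r is an integer of size at
   most R, or r = a / p^k with p^k <= R and |a| <= R p^k, leaving finitely many
   candidates.  Finally L_p(n) >= n on the integers. *)

Lemma padic_norm_ge0 (p : nat) (r : rat) : 0 <= padic_norm p r.
Proof. by rewrite /padic_norm; case: ifP => // _; apply: exprz_ge0. Qed.

Lemma padic_norm0 (p : nat) : padic_norm p 0 = 0.
Proof. by rewrite /padic_norm eqxx. Qed.

Lemma padic_normN (p : nat) (r : rat) : padic_norm p (- r) = padic_norm p r.
Proof. by rewrite /padic_norm /padic_val oppr_eq0 numqN denqN abszN. Qed.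

Section PadicNorm.

Variable p : nat.
Hypothesis p_prime : prime p.

Lemma natr_p_neq0 : (p%:R : rat) != 0.
Proof. by rewrite pnatr_eq0 -lt0n prime_gt0. Qed.

Lemma natr_p_ge1 : 1 <= (p%:R : rat).
Proof. by rewrite ler1n prime_gt0. Qed.

Lemma padic_valE (r : rat) (a : int) (m n : nat) :
  ~~ (p %| `|a|)%N -> r * p%:R ^+ m = a%:~R * p%:R ^+ n ->
  padic_val p r = n%:Z - m%:Z.
Proof.
move=> pNa rE.
have a_gt0 : (0 < `|a|)%N by case: (`|a|)%N pNa; rewrite ?dvdn0.
have r_neq0 : r != 0.
  have : a%:~R * p%:R ^+ n != 0 :> rat.
    by rewrite mulf_neq0 ?expf_neq0 ?natr_p_neq0 // intr_eq0 -absz_gt0.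
  by rewrite -rE mulf_eq0 negb_or => /andP[].
have numE : numq r * (p ^ m)%N%:Z = a * (p ^ n)%N%:Z * denq r.
  apply: (@intr_inj rat); rewrite !intrM -!pmulrn !natrX.
  by rewrite -rE mulrAC numqE.
have pX_gt0 k : (0 < p ^ k)%N by rewrite expn_gt0 prime_gt0.
have num_gt0 : (0 < `|numq r|)%N by rewrite absz_gt0 numq_eq0.
have den_gt0 : (0 < `|denq r|)%N by rewrite absz_gt0 denq_neq0.
move/(congr1 (logn p \o absz)): numE => /=; rewrite !abszM !absz_nat.
rewrite !lognM ?muln_gt0 ?a_gt0 ?pX_gt0 // !pfactorK //.
by rewrite (logn_coprime (m := `|a|)) ?prime_coprime // /padic_val; lia.
Qed.

Lemma padic_normE (r : rat) (a z : int) :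
  ~~ (p %| `|a|)%N -> r = a%:~R * p%:R ^ z -> padic_norm p r = p%:R ^ (- z).
Proof.
move=> pNa rE.
have a_neq0 : a != 0 by apply: contraNneq pNa => ->; rewrite dvdn0.
have r_neq0 : r != 0.
  by rewrite rE mulf_neq0 ?intr_eq0 ?expfz_neq0 ?natr_p_neq0.
rewrite /padic_norm (negbTE r_neq0); congr (_ ^ _).
case: z rE => n rE.
- by rewrite (@padic_valE r a 0 n) ?rE ?mulr1 //; lia.
- rewrite (@padic_valE r a n.+1 0) ?rE ?NegzE ?mulr1 //; first lia.
  by rewrite mulfVK // expf_neq0 // natr_p_neq0.
Qed.

Lemma int_pfactor_decomp (e : int) : e != 0 ->
  exists (a : int) (j : nat), ~~ (p %| `|a|)%N /\ e = a * (p ^ j)%N%:Z.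
Proof.
rewrite -absz_gt0 => e_gt0.
have [m p_coprime_m eE] := pfactor_coprime p_prime e_gt0.
exists ((-1) ^+ (e < 0)%R * m%:Z), (logn p `|e|).
rewrite abszMsign absz_nat -prime_coprime //; split => //.
by rewrite -mulrA -PoszM -eE -intEsign.
Qed.

Lemma padic_norm_le (r : rat) (e z : int) :
  r = e%:~R * p%:R ^ z -> padic_norm p r <= p%:R ^ (- z).
Proof.
have [-> rE|e_neq0 rE] := eqVneq e 0.
  by rewrite rE mul0r padic_norm0 exprz_ge0.
have [a [j [pNa eE]]] := int_pfactor_decomp e_neq0.
rewrite (@padic_normE r a (j%:Z + z)) //.
  by apply: ler_weXz2l; [exact: natr_p_ge1 | lia].
by rewrite rE eE intrM -pmulrn natrX expfzDr ?natr_p_neq0 // mulrA.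
Qed.

Lemma Zinvp_decomp (r : rat) : Zinvp p r -> r != 0 ->
  exists (a z : int), ~~ (p %| `|a|)%N /\ r = a%:~R * p%:R ^ z.
Proof.
move=> [e [k ->]] r_neq0.
have e_neq0 : e != 0 by apply: contraNneq r_neq0 => ->; rewrite mul0r.
have [a [j [pNa eE]]] := int_pfactor_decomp e_neq0.
exists a, (j%:Z - k%:Z); split => //.
by rewrite eE intrM -pmulrn natrX expfzDr ?natr_p_neq0 // exprnN mulrA.
Qed.

Lemma padic_norm_addr_le (r s : rat) (a c z w : int) :
  r = a%:~R * p%:R ^ z -> s = c%:~R * p%:R ^ w -> z <= w ->
  padic_norm p (r + s) <= p%:R ^ (- z).
Proof.
move=> rE sE zw; apply: (@padic_norm_le _ (a + c * (p ^ `|w - z|)%N%:Z)).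
have wE : w = `|w - z|%N%:Z + z by rewrite gez0_abs ?subr_ge0 // subrK.
rewrite rE sE {1}wE expfzDr ?natr_p_neq0 // intrD intrM -pmulrn natrX.
by rewrite mulrDl mulrA.
Qed.

Lemma padic_normD_le_max (r s : rat) : Zinvp p r -> Zinvp p s ->
  padic_norm p (r + s) <= Num.max (padic_norm p r) (padic_norm p s).
Proof.
move=> Zr Zs.
have [->|r_neq0] := eqVneq r 0; first by rewrite add0r le_max lexx orbT.
have [->|s_neq0] := eqVneq s 0; first by rewrite addr0 le_max lexx.
have [a [z [pNa rE]]] := Zinvp_decomp Zr r_neq0.
have [c [w [pNc sE]]] := Zinvp_decomp Zs s_neq0.
rewrite (padic_normE pNa rE) (padic_normE pNc sE) le_max.
have [zw|wz] := lerP z w.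
  by rewrite (padic_norm_addr_le rE sE zw).
by rewrite addrC (padic_norm_addr_le sE rE (ltW wz)) orbT.
Qed.

End PadicNorm.

Lemma Lp_ge0 (p : nat) (r : rat) : 0 <= Lp p r.
Proof. by rewrite addr_ge0 ?padic_norm_ge0. Qed.

Lemma Lp_eq0 (p : nat) (r : rat) : (Lp p r == 0) = (r == 0).
Proof.
rewrite /Lp paddr_eq0 ?padic_norm_ge0 // normr_eq0.
by case: eqP => // ->; rewrite padic_norm0 eqxx.
Qed.

Lemma LpN (p : nat) (r : rat) : Lp p (- r) = Lp p r.
Proof. by rewrite /Lp normrN padic_normN. Qed.

Lemma LpD (p : nat) (r s : rat) : prime p -> Zinvp p r -> Zinvp p s ->
  Lp p (r + s) <= Lp p r + Lp p s.
Proof.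
move=> p_prime Zr Zs; rewrite /Lp addrACA lerD ?ler_normD //.
apply: le_trans (padic_normD_le_max p_prime Zr Zs) _.
by rewrite ge_max !(lerDl, lerDr) !padic_norm_ge0.
Qed.

Lemma Lp_length_function (p : nat) : prime p ->
  is_length_function (Zinvp p) (Lp p).
Proof.
move=> p_prime.
split=> [r _|r _|r _|r s]; [exact: Lp_ge0 | | exact: LpN | exact: LpD].
by split=> [/eqP|->]; [rewrite Lp_eq0 => /eqP | apply/eqP; rewrite Lp_eq0].
Qed.

Lemma frac_grid_finite (R : unitRingType) (q : R) (N M : nat) :
  exists s : seq R, forall (k : nat) (a : int),
    (k <= N)%N -> (`|a| <= M)%N -> a%:~R / q ^+ k \in s.
Proof.
exists [seq a%:~R / q ^+ k | k <- iota 0 N.+1,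
                             a <- [seq i%:Z - M%:Z | i <- iota 0 M.*2.+1]].
move=> k a kN aM.
apply: (allpairs_f (fun k (a : int) => a%:~R / q ^+ k)).
  by rewrite mem_iota; lia.
by apply/mapP; exists `|(a + M%:Z)%R|%N; rewrite ?mem_iota; lia.
Qed.

Lemma Zinvp_ball_grid (p N : nat) (R r : rat) : prime p -> R < N%:R ->
  Zinvp p r -> Lp p r <= R -> exists (k : nat) (a : int),
    [/\ (k <= N)%N, (`|a| <= N * p ^ N)%N & r = a%:~R / p%:R ^+ k].
Proof.
move=> p_prime RN Zr Lr.
have [->|r_neq0] := eqVneq r 0; first by exists 0%N, 0; rewrite mul0r.
have [a [z [pNa rE]]] := Zinvp_decomp p_prime Zr r_neq0.
have r_lt : `|r| < N%:R.
  by move: Lr; rewrite /Lp; have := padic_norm_ge0 p r; lra.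
have pz_lt : p%:R ^ (- z) < N%:R :> rat.
  move: Lr; rewrite /Lp (padic_normE p_prime pNa rE).
  by have := normr_ge0 r; lra.
have pN_gt0 : (0 < p ^ N)%N by rewrite expn_gt0 prime_gt0.
case: z rE pz_lt => n rE pz_lt.
  exists 0%N, (a * (p ^ n)%N%:Z); split => //; last first.
    by rewrite expr0 divr1 intrM -pmulrn natrX rE.
  suff : `|a * (p ^ n)%N%:Z| < N%:Z by nia.
  rewrite -(ltr_int rat) intr_norm intrM -pmulrn natrX.
  by move: r_lt; rewrite rE.
have {}rE : r = a%:~R / p%:R ^+ n.+1 by rewrite rE.
have {}pz_lt : (p ^ n.+1 < N)%N.
  by rewrite -(ltr_nat rat) natrX; move: pz_lt; rewrite NegzE opprK.
have kN : (n.+1 <= N)%N by have := ltn_expl n.+1 (prime_gt1 p_prime); lia.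
exists n.+1, a; split => //.
have aE : `|a|%:~R = `|r| * (p ^ n.+1)%:R :> rat.
  by rewrite rE intr_norm normrM normfV normrX normr_nat natrX mulfVK
    ?expf_neq0 ?natr_p_neq0.
rewrite -(ler_nat rat) -[X in X <= _]/(`|a|%:~R) aE natrM.
rewrite ler_pM ?normr_ge0 ?ler0n ?(ltW r_lt) //.
by rewrite ler_nat leq_pexp2l ?prime_gt0.
Qed.

Lemma Lp_proper (p : nat) : prime p -> is_proper_length (Zinvp p) (Lp p).
Proof.
move=> p_prime R R_ge0; set N := Num.bound R.
have [s grid_s] := frac_grid_finite (p%:R : rat) N (N * p ^ N).
exists s => r Zr Lr.
have [k [a [kN aM ->]]] := Zinvp_ball_grid p_prime (archi_boundP R_ge0) Zr Lr.
exact: grid_s.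
Qed.

Lemma Lp_unbounded (p : nat) : is_unbounded (Zinvp p) (Lp p).
Proof.
move=> R; set N := Num.bound `|R|.
exists N%:R; split; first by exists N%:Z, 0%N; rewrite divr1.
rewrite /Lp normr_nat; have := padic_norm_ge0 p N%:R.
have := archi_boundP (normr_ge0 R); have := ler_norm R; lra.
Qed.

Theorem lemma3p4 (p : nat) : prime p ->
  [/\ is_length_function (Zinvp p) (Lp p),
      is_proper_length (Zinvp p) (Lp p)
    & is_unbounded (Zinvp p) (Lp p)].
Proof.
move=> p_prime; split.
- exact: Lp_length_function.
- exact: Lp_proper.
- exact: Lp_unbounded.
Qed.
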